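(* Let $n\ge2$, let $r_1,\dots,r_n$ be nonzero rationals, and let $R(x_1,\dots,x_n,z)$ be a definable relation such that for every linearly independent tuple $a_1,\dots,a_n\in\mathcal M$ and every $z$: $$R(\bar a,z)\iff z\in\Big\{r_1a_1+\sum_{i=2}^n s_ir_ia_i: s_2,\dots,s_n\in\{-1,1\}\Big\}.$$ Then the relation $z=x+y$ is definable by $\{R,\ z=\pm x\pm y\}$.
   Context: $\mathcal M$ denotes the $\mathbb Q$-vector space $\mathbb Q^{<\omega}$ of all sequences of rationals with only finitely many nonzero terms, with zero vector $\vec 0$. A relation is definable if it is first-order definable without parameters in $\langle\mathcal M;+\rangle$; a relation is definable by $\Sigma$ if it is first-order definable without parameters in $\langle\mathcal M;\Sigma\rangle$. The relation $z=\pm x\pm y$ is $\{(x,y,z): z\in\{x+y,x-y,-x+y,-x-y\}\}$. *)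

From HB Require Import structures.
From mathcomp Require Import all_boot all_order all_algebra.
Set Implicit Arguments. Unset Strict Implicit. Unset Printing Implicit Defensive.
Import Order.TTheory GRing.Theory Num.Theory.
Local Open Scope ring_scope.

(** * The structure M = Q^{<omega}: rational sequences with finite support *)
Record M := MkM { mval : nat -> rat ;
                  mfin : exists N : nat, forall k : nat, (N <= k)%N -> mval k = 0 }.

Definition meq (x y : M) : Prop := forall k, mval x k = mval y k.

Definition plusR (x y z : M) : Prop := forall k, mval z k = mval x k + mval y k.

Definition pmR (x y z : M) : Prop :=
  exists e1 e2 : rat, (e1 = 1 \/ e1 = -1) /\ (e2 = 1 \/ e2 = -1) /\
    forall k, mval z k = e1 * mval x k + e2 * mval y k.

Definition lin_indep (n : nat) (a : 'I_n -> M) : Prop :=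
  forall c : 'I_n -> rat,
    (forall k, \sum_(i < n) c i * mval (a i) k = 0) -> forall i, c i = 0.

Section FOL.
Variable (L : Type) (ar : L -> nat).

Inductive formula : Type :=
  | FEq  : nat -> nat -> formula
  | FRel : forall s : L, ('I_(ar s) -> nat) -> formula
  | FNot : formula -> formula
  | FAnd : formula -> formula -> formula
  | FEx  : nat -> formula -> formula.

Variable (D : Type) (I : forall s : L, ('I_(ar s) -> D) -> Prop).

Definition upd (env : nat -> D) (x : nat) (d : D) : nat -> D :=
  fun y => if y == x then d else env y.

Fixpoint holds (env : nat -> D) (phi : formula) : Prop :=
  match phi with
  | FEq x y => env x = env y
  | FRel s args => I (fun j => env (args j))
  | FNot p => ~ holds env p
  | FAnd p q => holds env p /\ holds env q
  | FEx x p => exists d : D, holds (upd env x d) p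
  end.

(** a k-ary relation P on D is first-order definable without parameters:
    some formula whose free variables are among 0..k-1 defines it *)
Definition definable (k : nat) (P : ('I_k -> D) -> Prop) : Prop :=
  exists phi : formula, forall env : nat -> D,
    P (fun i : 'I_k => env (val i)) <-> holds env phi.
End FOL.

(** Structure <M; +> : one ternary symbol interpreted as the graph of + *)
Definition plus_ar (_ : unit) : nat := 3.
Definition plus_I (s : unit) (t : 'I_(plus_ar s) -> M) : Prop :=
  plusR (t (inord 0)) (t (inord 1)) (t (inord 2)).

Definition definable_plus (k : nat) (P : ('I_k -> M) -> Prop) : Prop :=
  definable plus_I P.

(** Structure <M; R, z = +-x +-y> where R is (n+1)-ary *)
Definition RS_ar (n : nat) (b : bool) : nat := if b then n.+1 else 3.
Definition RS_I (n : nat) (R : ('I_n.+1 -> M) -> Prop) (b : bool) :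
  ('I_(RS_ar n b) -> M) -> Prop :=
  match b return ('I_(RS_ar n b) -> M) -> Prop with
  | true => R
  | false => fun t => pmR (t (inord 0)) (t (inord 1)) (t (inord 2))
  end.

Definition snoc_tuple (n : nat) (a : 'I_n -> M) (z : M) : 'I_n.+1 -> M :=
  fun j => match unlift ord_max j with Some i => a i | None => z end.

Definition plus_rel (t : 'I_3 -> M) : Prop :=
  plusR (t (inord 0)) (t (inord 1)) (t (inord 2)).

From HB Require Import structures.
From mathcomp Require Import all_boot all_order all_algebra.
From mathcomp Require Import ring lra zify.
From Stdlib Require Import FunctionalExtensionality ProofIrrelevance Classical.
Set Implicit Arguments. Unset Strict Implicit. Unset Printing Implicit Defensive.
Import Order.TTheory GRing.Theory Num.Theory.
Local Open Scope ring_scope.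

(** Scaling by a fixed rational is definable from [z = ±x±y]: for [u <> 0],
    [v = ±(k+2)u] iff [v = ±u ± d] for some [d = ±(k+1)u] and not [v = ±k u];
    and [v = ±(B/A)u] iff [u = ±A w] and [v = ±B w] for some [w].

    A vector [c] escapes finitely many vectors if it is nonzero at a coordinate
    where they all vanish.  A property that holds for every escaping [c], or fails
    for every escaping [c], is captured by [large]: every [d] is [±e ± e'] with
    [e] and [e'] in the property.  This stands in for "for almost all [c]".

    Let [x, y] be independent and [c_3, ..., c_n] escape [x, y, s] one after the
    other.  For [b = ±(r_1/r_2) y] and [w = ±(r_1/r_2) x], the common values of
    [R(x, b, c, -)] and [R(y, w, c, -)] are exactly [r_1 (x + y) + Σ ±r_i c_i].
    If [s] is [±1/(2 r_1)] times [±z ± z'] for two such values, then [s] is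
    [e (x + y)] with [e] in [{1, -1, 0}] plus a combination of the [c_i], and that
    combination vanishes because the [c_i] escape [x, y, s].  This defines
    [s = ±(x + y)] for independent [x, y], and [s = x + y] is the case where not
    [y = ±(s + x)].  Finally [x + y = s] iff [(x + u) + y = u + s] for an escaping
    [u], which makes all three sums sums of independent vectors. *)

Lemma M_ext (x y : M) : (forall k, mval x k = mval y k) -> x = y.
Proof.
case: x y => [fx hx] [fy hy] /= E.
have {}E : fx = fy by apply: functional_extensionality.
by subst fy; rewrite (proof_irrelevance _ hx hy).
Qed.

Definition zeroM : M := @MkM (fun _ => 0) (ex_intro _ 0%N (fun _ _ => erefl)).

Lemma lcM_subproof (a b : rat) (x y : M) :
  exists N : nat, forall k : nat, (N <= k)%N -> a * mval x k + b * mval y k = 0.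
Proof.
case: (mfin x) => Nx Hx; case: (mfin y) => Ny Hy.
exists (maxn Nx Ny) => k; rewrite geq_max => /andP[kx ky].
by rewrite Hx ?Hy // !mulr0 addr0.
Qed.

Definition lcM (a b : rat) (x y : M) : M := MkM (lcM_subproof a b x y).

Lemma unitM_subproof (N : nat) :
  exists N', forall k : nat, (N' <= k)%N -> (if k == N then 1 else 0 : rat) = 0.
Proof. by exists N.+1 => k; case: eqP => // ->; rewrite ltnn. Qed.

Definition unitM (N : nat) : M := MkM (unitM_subproof N).

Definition null (u : M) := forall k, mval u k = 0.

Lemma not_null_coord (u : M) : ~ null u -> exists k, mval u k != 0.
Proof.
move=> nu; apply: NNPP => nex; apply: nu => k.
by apply/eqP; apply: contra_notT nex => uk; exists k.
Qed.

Definition sign (s : rat) := s = 1 \/ s = -1.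

Lemma sign1 : sign 1. Proof. by left. Qed.

Lemma signN1 : sign (-1). Proof. by right. Qed.

Lemma signN s : sign s -> sign (- s).
Proof. by case=> ->; [right | left; rewrite opprK]. Qed.

Lemma signM s t : sign s -> sign t -> sign (s * t).
Proof. by case=> ->; case=> ->; rewrite ?mulN1r ?opprK ?mul1r; [left|right|right|left]. Qed.

Lemma sign_neq0 s : sign s -> s != 0.
Proof. by case=> ->; rewrite ?oppr_eq0 oner_eq0. Qed.

Lemma pmRI e1 e2 (x y z : M) : sign e1 -> sign e2 ->
  (forall k, mval z k = e1 * mval x k + e2 * mval y k) -> pmR x y z.
Proof. by move=> h1 h2 E; exists e1, e2. Qed.

(** * Signed rational multiples *)

Definition pm_scale (c : rat) (u v : M) :=
  exists s, sign s /\ forall k, mval v k = s * c * mval u k.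

Lemma pm_scaleN c u v : pm_scale (- c) u v <-> pm_scale c u v.
Proof.
by split=> -[s [hs E]]; exists (- s); split; [exact: signN | | exact: signN |];
  move=> k; rewrite E; ring.
Qed.

Lemma pm_scale_coef c c' u v : ~ null u ->
  pm_scale c u v -> pm_scale c' u v -> c = c' \/ c = - c'.
Proof.
move=> /not_null_coord [k uk] [s [hs Es]] [t [ht Et]].
have /eqP : (s * c - t * c') * mval u k = 0 by rewrite mulrBl -Es -Et subrr.
rewrite mulf_eq0 (negbTE uk) orbF subr_eq0 => /eqP.
by case: hs => ->; case: ht => -> E; [left|right|right|left]; lra.
Qed.

Lemma sign_add_mul_natS e t (k : nat) : sign e -> sign t ->
  exists s, sign s /\ (e + t * k.+1%:R = s * k.+2%:R \/ e + t * k.+1%:R = s * k%:R).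
Proof.
rewrite -[k.+2]addn1 -[k.+1]addn1 !natrD.
case=> ->; case=> ->.
- by exists 1; split; [left | left; ring].
- by exists (-1); split; [right | right; ring].
- by exists 1; split; [left | right; ring].
- by exists (-1); split; [right | left; ring].
Qed.

Lemma pm_scale_null c u v : null u -> (pm_scale c u v <-> null v).
Proof.
move=> nu; split=> [[s [_ E]] k | nv]; first by rewrite E nu mulr0.
by exists 1; split=> [|k]; [exact: sign1 | rewrite nu nv mulr0].
Qed.

Lemma pm_scale0 u v : pm_scale 0 u v <-> null v.
Proof.
split=> [[s [_ E]] k | nv]; first by rewrite E mulr0 mul0r.
by exists 1; split=> [|k]; [exact: sign1 | rewrite nv mulr0 mul0r].
Qed.

Lemma null_pmR u : null u <-> pmR u u u.
Proof.
split=> [nu | [e1 [e2 [h1 [h2 E]]]] k]; first by apply: (pmRI sign1 sign1) => k; rewrite nu addr0.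
by move: (E k); case: h1 => ->; case: h2 => -> ?; lra.
Qed.

Lemma pm_scale1 u v : pm_scale 1 u v <-> exists o, null o /\ pmR u o v.
Proof.
split=> [[s [hs E]] | [o [no [e1 [e2 [h1 [_ E]]]]]]].
  by exists zeroM; split=> //; apply: (pmRI hs sign1) => k; rewrite E /=; ring.
by exists e1; split=> // k; rewrite E no mulr0 addr0 mulr1.
Qed.

Lemma pm_scale_natSS (k : nat) u v : pm_scale k.+2%:R u v <->
  (exists d, pm_scale k.+1%:R u d /\ pmR u d v) /\ ~ (pm_scale k%:R u v /\ ~ null u).
Proof.
have [nu | nnu] := classic (null u).
  rewrite !pm_scale_null //.
  split=> [nv | [[d [/(pm_scale_null _ _ nu) nd [e1 [e2 [_ [_ E]]]]]] _] i].
    split; last by case.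
    exists u; split; first exact/pm_scale_null.
    by apply: (pmRI sign1 sign1) => i; rewrite nv nu addr0.
  by rewrite E nu nd !mulr0 addr0.
split=> [[s [hs E]] | [[d [[s [hs Ed]] [e1 [e2 [he1 [he2 E]]]]]] nk]].
  split.
    exists (lcM (s * k.+1%:R) 0 u u); split; first by exists s; split=> // i /=; ring.
    by apply: (pmRI hs sign1) => i; rewrite E /= -[k.+2]addn1 natrD; ring.
  case=> /(pm_scale_coef nnu (ex_intro _ s (conj hs E))) + _.
  have k0 : 0 <= k%:R :> rat := ler0n _ k.
  by rewrite -[k.+2]addn2 natrD; case=> ?; lra.
have [s' [hs' [Es | Es]]] := sign_add_mul_natS k he1 (signM he2 hs).
  by exists s'; split=> // i; rewrite E Ed -Es; ring.
by exfalso; apply: nk; split=> //; exists s'; split=> // i; rewrite E Ed -Es; ring.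
Qed.

Lemma pm_scale_ratio (A B : nat) u v : (0 < A)%N ->
  pm_scale (B%:R / A%:R) u v <-> exists w, pm_scale A%:R w u /\ pm_scale B%:R w v.
Proof.
rewrite -(ltr0n rat) => /lt0r_neq0 A0.
split=> [[s [hs E]] | [w [[s [hs Eu]] [t [ht Ev]]]]].
  exists (lcM (A%:R^-1) 0 u u); split.
    by exists 1; split=> [|k /=]; [exact: sign1 | field].
  by exists s; split=> // k /=; rewrite E; field.
exists (s * t); split; first exact: signM.
by move=> k; rewrite Ev Eu; case: hs => ->; field.
Qed.

Lemma rat_ratio (c : rat) :
  exists A B : nat, (0 < A)%N /\ (c = B%:R / A%:R \/ c = - (B%:R / A%:R)).
Proof.
exists `|denq c|%N, `|numq c|%N; split; first by rewrite absz_gt0 denq_neq0.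
rewrite !natr_absz (gtr0_norm (denq_gt0 c)).
have Ec := esym (divq_num_den c); set n := numq c in Ec *; rewrite {1 3}Ec.
case: (ltrP n 0) => h; last by left; rewrite ger0_norm.
by right; rewrite ltr0_norm // mulrNz mulNr opprK.
Qed.

(** * Escaping vectors and the quantifier [large] *)

Definition vanish_on (P : seq M) (K : nat) := forall p, List.In p P -> mval p K = 0.

Lemma vanish_on_cat P P' K : vanish_on (P ++ P') K <-> vanish_on P K /\ vanish_on P' K.
Proof.
split=> [H | [H H'] p /(@List.in_app_or M P P' p) [] Hp]; [| exact: H | exact: H'].
by split=> p Hp; apply: H; apply: List.in_or_app; [left | right].
Qed.

Lemma vanish_on_eventually P : exists N, forall K, (N <= K)%N -> vanish_on P K.
Proof.
elim: P => [|p P [N HN]]; first by exists 0%N => K _ p [].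
have [Np Hp] := mfin p.
exists (maxn Np N) => K; rewrite geq_max => /andP[hp hN] q [<- | Hq]; [exact: Hp | exact: HN].
Qed.

Definition escapes (P : seq M) (c : M) := exists K, vanish_on P K /\ mval c K != 0.

Lemma not_escapes P c K : ~ escapes P c -> vanish_on P K -> mval c K = 0.
Proof. by move=> nc HK; apply/eqP; apply: contra_notT nc => cK; exists K. Qed.

Definition large (Q : M -> Prop) := forall d, exists e e', pmR e e' d /\ Q e /\ Q e'.

Lemma large_iff P (Q : M -> Prop) (T : Prop) :
  (forall c, escapes P c -> (Q c <-> T)) -> (large Q <-> T).
Proof.
move=> HQ; have [hT | nT] := classic T.
  split=> // _ d.
  have [N /(_ N (leqnn N)) /vanish_on_cat [dN PN]] := vanish_on_eventually ([:: d] ++ P).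
  have d0 : mval d N = 0 by apply: dN; left.
  exists (unitM N), (lcM 1 (-1) d (unitM N)).
  split; first by apply: (pmRI sign1 sign1) => k /=; ring.
  have esc c : mval c N != 0 -> escapes P c by exists N.
  by split; apply: (HQ _ _).2 hT; apply: esc; rewrite /= eqxx ?d0 ?add0r ?mulr1 ?oppr_eq0 oner_neq0.
split=> // HL; have [N /(_ N (leqnn N)) PN] := vanish_on_eventually P.
have [e [e' [[e1 [e2 [_ [_ E]]]] [Qe Qe']]]] := HL (unitM N).
have {}Qe : ~ escapes P e by move=> /HQ[/(_ Qe)].
have {}Qe' : ~ escapes P e' by move=> /HQ[/(_ Qe')].
by move/eqP: (E N); rewrite /= eqxx !(not_escapes _ PN) // !mulr0 addr0 oner_eq0.
Qed.

Fixpoint large_iter (j : nat) (S : seq M -> Prop) (l : seq M) : Prop :=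
  if j is j'.+1 then large (fun c => large_iter j' S (c :: l)) else S l.

Fixpoint escaping (P cs : seq M) : Prop :=
  if cs is c :: cs' then escapes (cs' ++ P) c /\ escaping P cs' else True.

Lemma large_iter_iff P S (T : Prop) j cs : escaping P cs ->
  (forall ds, size ds = j -> escaping P (ds ++ cs) -> (S (ds ++ cs ++ P) <-> T)) ->
  (large_iter j S (cs ++ P) <-> T).
Proof.
elim: j cs => [|j IH] cs escs HS /=; first exact: (HS [::]).
apply: (large_iff (P := cs ++ P)) => c escc.
apply: (IH (c :: cs)) => // ds dsj esc.
by rewrite -cat_rcons; apply: HS; rewrite ?size_rcons ?dsj ?cat_rcons.
Qed.

Definition comb (mu : nat -> rat) (cs : seq M) (k : nat) : rat :=
  \sum_(j < size cs) mu j * mval (nth zeroM cs j) k.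

Lemma comb_cons mu c cs k :
  comb mu (c :: cs) k = mu 0%N * mval c k + comb (fun j => mu j.+1) cs k.
Proof. by rewrite /comb big_ord_recl. Qed.

Lemma eq_comb mu nu cs k : (forall j, (j < size cs)%N -> mu j = nu j) ->
  comb mu cs k = comb nu cs k.
Proof. by move=> E; apply: eq_bigr => j _; rewrite E. Qed.

Lemma comb_lin a b mu nu cs k :
  comb (fun j => a * mu j + b * nu j) cs k = a * comb mu cs k + b * comb nu cs k.
Proof. by rewrite /comb !mulr_sumr -big_split; apply: eq_bigr => j _; rewrite mulrDl !mulrA. Qed.

Lemma comb_vanish mu cs K : vanish_on cs K -> comb mu cs K = 0.
Proof.
elim: cs mu => [|c cs IH] mu Hcs; first by rewrite /comb big_ord0.
rewrite comb_cons Hcs ?IH ?mulr0 ?addr0 //; last by left.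
by move=> p Hp; apply: Hcs; right.
Qed.

Lemma combN mu cs k : comb (fun j => - mu j) cs k = - comb mu cs k.
Proof. by rewrite /comb -sumrN; apply: eq_bigr => j _; rewrite mulNr. Qed.

Lemma combM_subproof mu cs : exists N, forall k, (N <= k)%N -> comb mu cs k = 0.
Proof. by have [N HN] := vanish_on_eventually cs; exists N => k /HN /comb_vanish. Qed.

Definition combM mu cs : M := MkM (combM_subproof mu cs).

Definition supported (P : seq M) (v : nat -> rat) := forall K, vanish_on P K -> v K = 0.

Lemma escaping_comb_coef P cs mu : escaping P cs -> supported P (comb mu cs) ->
  forall j, (j < size cs)%N -> mu j = 0.
Proof.
elim: cs mu => [|c cs IH] //= mu [[K [/vanish_on_cat [csK PK] cK]] escs] Hmu.
have mu0 : mu 0%N = 0.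
  by move/eqP: (Hmu K PK); rewrite comb_cons comb_vanish // addr0 mulf_eq0 (negbTE cK) orbF => /eqP.
case=> [|j] hj //; apply: (IH (fun j => mu j.+1)) => // K' PK'.
by have := Hmu K' PK'; rewrite comb_cons mu0 mul0r add0r.
Qed.

Lemma escaping_comb0 P cs mu : escaping P cs -> supported P (comb mu cs) ->
  forall k, comb mu cs k = 0.
Proof.
move=> escs /(escaping_comb_coef escs) mu0 k.
by rewrite /comb big1 // => j _; rewrite mu0 ?mul0r ?ltn_ord.
Qed.

Definition indep2 (x y : M) := forall a b : rat,
  (forall k, a * mval x k + b * mval y k = 0) -> a = 0 /\ b = 0.

Lemma indep2C x y : indep2 x y -> indep2 y x.
Proof. by move=> H a b E; have [] := H b a => [k|-> ->//]; rewrite addrC. Qed.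

Lemma indep2_scale x y y' c : indep2 x y -> c != 0 ->
  (forall k, mval y' k = c * mval y k) -> indep2 x y'.
Proof.
move=> H c0 E a b Eab; have [k | -> /eqP] := H a (b * c); first by rewrite -(Eab k) E mulrA.
by rewrite mulf_eq0 (negbTE c0) orbF => /eqP.
Qed.

Lemma escapes_indep2 P x c : ~ null x -> List.In x P -> escapes P c -> indep2 x c.
Proof.
move=> /not_null_coord [k xk] xP [K [PK cK]] a b E.
have b0 : b = 0.
  by move/eqP: (E K); rewrite (PK x xP) mulr0 add0r mulf_eq0 (negbTE cK) orbF => /eqP.
by move/eqP: (E k); rewrite b0 mul0r addr0 mulf_eq0 (negbTE xk) orbF => /eqP.
Qed.

Definition pm_sum (x y s : M) :=
  exists e, sign e /\ forall k, mval s k = e * (mval x k + mval y k).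

Lemma pm_sum_not_null x y s : indep2 x y -> pm_sum x y s -> ~ null s.
Proof.
move=> xy [e [he Es]] ns; have [] := xy 1 1 => [k | /eqP]; last by rewrite oner_eq0.
by move/eqP: (Es k); rewrite ns eq_sym mulf_eq0 (negbTE (sign_neq0 he)) !mul1r => /eqP.
Qed.

Lemma indep2_pm_sum x y s : indep2 x y -> pm_sum x y s -> indep2 s x.
Proof.
move=> xy [e [he Es]] a b E.
have [k | c1 /eqP] := xy (a * e + b) (a * e); first by rewrite -(E k) Es; ring.
rewrite mulf_eq0 (negbTE (sign_neq0 he)) orbF => /eqP a0.
by move: c1; rewrite a0 mul0r add0r.
Qed.

Lemma sum_nth_cons2 m (c : 'I_m.+2 -> rat) x y cs k : size cs = m ->
  \sum_(i < m.+2) c i * mval (nth zeroM [:: x, y & cs] i) k =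
  c ord0 * mval x k + c (lift ord0 ord0) * mval y k + comb (fun j => c (inord j.+2)) cs k.
Proof.
move=> csm; rewrite !big_ord_recl addrA /comb csm; congr (_ + _).
apply: eq_bigr => j _; congr (c _ * _).
by apply: val_inj; rewrite /= inordK // !ltnS.
Qed.

Lemma lin_indep_cons2 m P x y cs : size cs = m -> indep2 x y ->
  supported P (mval x) -> supported P (mval y) -> escaping P cs ->
  lin_indep (fun i : 'I_m.+2 => nth zeroM [:: x, y & cs] i).
Proof.
move=> csm xy Px Py escs c H.
have {}H k : c ord0 * mval x k + c (lift ord0 ord0) * mval y k +
    comb (fun j => c (inord j.+2)) cs k = 0 by rewrite -(sum_nth_cons2 c x y k csm) H.
have supp : supported P (comb (fun j => c (inord j.+2)) cs).
  by move=> K PK; move: (H K); rewrite Px // Py // !mulr0 !add0r.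
have [c0 c1] : c ord0 = 0 /\ c (lift ord0 ord0) = 0.
  by apply: xy => k; rewrite -(H k) (escaping_comb0 escs supp) addr0.
case=> [[|[|j]] hj].
- by rewrite -c0; congr c; apply: val_inj.
- by rewrite -c1; congr c; apply: val_inj.
- rewrite -(escaping_comb_coef escs supp (j := j)) ?csm //; congr c.
  by apply: val_inj; rewrite /= inordK.
Qed.

Lemma map_nth_iota_cat (s l : seq M) :
  map (nth zeroM (s ++ l)) (iota (size s) (size l)) = l.
Proof.
by rewrite map_nth_iota ?size_cat ?addKn // drop_size_cat // take_size.
Qed.

(** * Expressibility *)

Lemma all_iota_lt i n j : (i + n <= j)%N -> all (fun k => k < j)%N (iota i n).
Proof. by move=> h; apply/allP => k; rewrite mem_iota; lia. Qed.


Section Expressible.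
Variables (m : nat) (R : ('I_m.+3 -> M) -> Prop).

(* [Q] is defined by a formula at every list of [k] variables, repetitions
   allowed; this builds substitution into the notion ([expressible_select]), so
   formulas never have to be renamed. *)
Definition expressible (k : nat) (Q : seq M -> Prop) :=
  forall vs : seq nat, size vs = k ->
    exists phi, forall env, Q (map env vs) <-> holds (RS_I R) env phi.

Lemma expressible_ext k (Q Q' : seq M -> Prop) :
  (forall l, size l = k -> (Q l <-> Q' l)) -> expressible k Q -> expressible k Q'.
Proof.
move=> QQ' EQ vs vsk; have [phi Hphi] := EQ vs vsk.
by exists phi => env; rewrite -QQ' ?size_map.
Qed.

Lemma expressible_not k Q : expressible k Q -> expressible k (fun l => ~ Q l).
Proof.
by move=> EQ vs vsk; have [phi Hphi] := EQ vs vsk; exists (FNot phi) => env /=; rewrite Hphi.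
Qed.

Lemma expressible_and k Q Q' : expressible k Q -> expressible k Q' ->
  expressible k (fun l => Q l /\ Q' l).
Proof.
move=> EQ EQ' vs vsk; have [phi Hphi] := EQ vs vsk; have [phi' Hphi'] := EQ' vs vsk.
by exists (FAnd phi phi') => env /=; rewrite Hphi Hphi'.
Qed.

Lemma expressible_or k Q Q' : expressible k Q -> expressible k Q' ->
  expressible k (fun l => Q l \/ Q' l).
Proof.
move=> EQ EQ'; apply: expressible_ext (expressible_not
  (expressible_and (expressible_not EQ) (expressible_not EQ'))) => l _.
split=> [nQQ' | ]; last tauto.
by apply: NNPP => nQ; apply: nQQ'; split=> ?; apply: nQ; [left | right].
Qed.

Lemma expressible_exists k Q : expressible k.+1 Q ->
  expressible k (fun l => exists d, Q (d :: l)).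
Proof.
move=> EQ vs vsk; set f := (\max_(v <- vs) v).+1.
have [phi Hphi] := EQ (f :: vs) (congr1 succn vsk).
have Eupd env d : map (upd env f d) (f :: vs) = d :: map env vs.
  rewrite /= {1}/upd eqxx; congr (_ :: _); apply/eq_in_map => v vvs.
  rewrite /upd ifN_eq // neq_ltn ltnS; apply/orP; left.
  exact: (leq_bigmax_seq v vvs isT).
exists (FEx f phi) => env /=.
by split=> -[d Hd]; exists d; [apply/Hphi; rewrite Eupd | rewrite -Eupd; apply/Hphi].
Qed.

Lemma expressible_forall k Q : expressible k.+1 Q ->
  expressible k (fun l => forall d, Q (d :: l)).
Proof.
move=> /expressible_not/expressible_exists/expressible_not.
apply: expressible_ext => l _; split=> [H d | H [d]]; last exact.
by apply: NNPP => nQ; apply: H; exists d.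
Qed.

Lemma expressible_select k j Q idx : expressible k Q -> size idx = k ->
  all (fun i => i < j)%N idx -> expressible j (fun l => Q (map (nth zeroM l) idx)).
Proof.
move=> EQ idxk /allP idxj vs vsj.
have [phi Hphi] := EQ (map (nth 0%N vs) idx) (etrans (size_map _ _) idxk).
exists phi => env; rewrite -Hphi -map_comp.
suff -> : map (nth zeroM (map env vs)) idx = map (env \o nth 0%N vs) idx by [].
by apply/eq_in_map => i /idxj; rewrite -vsj => ij /=; rewrite (nth_map 0%N).
Qed.

Lemma expressible_eq : expressible 2 (fun l => nth zeroM l 0 = nth zeroM l 1).
Proof. by case=> [|a [|b [|]]] // _; exists (FEq _ a b). Qed.

Lemma expressible_pmR :
  expressible 3 (fun l => pmR (nth zeroM l 0) (nth zeroM l 1) (nth zeroM l 2)).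
Proof.
case=> [|a [|b [|c [|]]]] // _.
by exists (@FRel _ (RS_ar m.+2) false (fun j => nth 0%N [:: a; b; c] j)) => env; rewrite /= !inordK.
Qed.

Lemma expressible_R : expressible m.+3 (fun l => R (fun j => nth zeroM l j)).
Proof.
move=> vs vsm; exists (@FRel _ (RS_ar m.+2) true (fun j => nth 0%N vs j)) => env /=.
suff -> : (fun j : 'I_m.+3 => nth zeroM (map env vs) j) = (fun j => env (nth 0%N vs j)) by [].
by apply: functional_extensionality => j; rewrite (nth_map 0%N) // vsm.
Qed.

Lemma expressible_large k Q : expressible k.+1 Q ->
  expressible k (fun l => large (fun c => Q (c :: l))).
Proof.
move=> EQ.
have sel i : (i < 3)%N -> expressible k.+3 (fun l => Q (map (nth zeroM l) (i :: iota 3 k))).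
  move=> i3; apply: expressible_select EQ _ _; first by rewrite /= size_iota.
  apply/allP => j; rewrite inE mem_iota; lia.
have pm : expressible k.+3 (fun l => pmR (nth zeroM l 1) (nth zeroM l 0) (nth zeroM l 2)).
  exact: (expressible_select (idx := [:: 1; 0; 2]%N) expressible_pmR).
apply: expressible_ext (expressible_forall (expressible_exists (expressible_exists
  (expressible_and pm (expressible_and (sel 1%N isT) (sel 0%N isT)))))) => l <-.
have Ml a b c : map (nth zeroM [:: a, b, c & l]) (iota 3 (size l)) = l.
  exact: (map_nth_iota_cat [:: a; b; c]).
by split=> H d; have [e [e' H']] := H d; exists e, e'; move: H'; rewrite /= !Ml.
Qed.

Lemma expressible_large_iter j k S : expressible (j + k) S -> expressible k (large_iter j S).
Proof.
elim: j k => [|j IH] k ES //=.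
by apply: expressible_large; apply: IH; rewrite addnS -addSn.
Qed.

Lemma expressible_rot k j Q : (j <= k)%N -> expressible k Q -> expressible k (fun l => Q (rot j l)).
Proof.
move=> jk EQ.
apply: expressible_ext (expressible_select EQ (idx := rot j (iota 0 k)) _ _) => [l lk||].
- by rewrite -lk map_rot map_nth_iota0 ?take_size.
- by rewrite size_rot size_iota.
- by apply/allP => i; rewrite mem_rot mem_iota.
Qed.

Lemma expressible_null : expressible 1 (fun l => null (nth zeroM l 0)).
Proof.
apply: expressible_ext (expressible_select (idx := [:: 0; 0; 0]%N) expressible_pmR _ _) => // l _.
by rewrite null_pmR.
Qed.

Lemma expressible_pm_scale_nat k :
  expressible 2 (fun l => pm_scale k%:R (nth zeroM l 0) (nth zeroM l 1)).
Proof.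
pose PS k := fun l => pm_scale k%:R (nth zeroM l 0) (nth zeroM l 1).
suff [] : expressible 2 (PS k) /\ expressible 2 (PS k.+1) by [].
elim: k => [|k [IHk IHk1]].
  split.
    apply: expressible_ext (expressible_select (idx := [:: 1%N]) expressible_null _ _) => // l _.
    by rewrite /PS pm_scale0.
  have body : expressible 3 (fun l => null (nth zeroM l 0) /\
      pmR (nth zeroM l 1) (nth zeroM l 0) (nth zeroM l 2)).
    apply: expressible_and (expressible_select (idx := [:: 0%N]) expressible_null _ _) _ => //.
    exact: (expressible_select (idx := [:: 1; 0; 2]%N) expressible_pmR).
  by apply: expressible_ext (expressible_exists body) => l _; rewrite /PS pm_scale1.
split=> //.
have body : expressible 3 (fun l => pm_scale k.+1%:R (nth zeroM l 1) (nth zeroM l 0) /\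
    pmR (nth zeroM l 1) (nth zeroM l 0) (nth zeroM l 2)).
  apply: expressible_and (expressible_select (idx := [:: 1; 0]%N) IHk1 _ _) _ => //.
  exact: (expressible_select (idx := [:: 1; 0; 2]%N) expressible_pmR).
have nu : expressible 2 (fun l => ~ null (nth zeroM l 0)).
  exact: expressible_not (expressible_select (idx := [:: 0%N]) expressible_null _ _).
apply: expressible_ext (expressible_and (expressible_exists body)
  (expressible_not (expressible_and IHk nu))) => //.
by move=> l _; rewrite /PS pm_scale_natSS.
Qed.

Lemma expressible_pm_scale c :
  expressible 2 (fun l => pm_scale c (nth zeroM l 0) (nth zeroM l 1)).
Proof.
have [A [B [A0 Ec]]] := rat_ratio c.
have body : expressible 3 (fun l => pm_scale A%:R (nth zeroM l 0) (nth zeroM l 1) /\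
    pm_scale B%:R (nth zeroM l 0) (nth zeroM l 2)).
  apply: expressible_and
    (expressible_select (idx := [:: 0; 1]%N) (expressible_pm_scale_nat A) _ _) _ => //.
  exact: (expressible_select (idx := [:: 0; 2]%N) (expressible_pm_scale_nat B)).
apply: expressible_ext (expressible_exists body) => l _.
by rewrite -(pm_scale_ratio _ _ _ A0); case: Ec => ->; rewrite ?pm_scaleN.
Qed.

Lemma definable_plus_rel :
  expressible 3 (fun l => plusR (nth zeroM l 0) (nth zeroM l 1) (nth zeroM l 2)) ->
  definable (RS_I R) plus_rel.
Proof.
move=> E; have [phi Hphi] := E [:: 0; 1; 2]%N erefl.
by exists phi => env; rewrite -Hphi /plus_rel /= !inordK.
Qed.

End Expressible.

(** * Addition from [R] *)

Section Addition.
Variables (m : nat) (r : 'I_m.+2 -> rat) (R : ('I_m.+3 -> M) -> Prop).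
Hypothesis hr : forall i, r i != 0.
Hypothesis hR : forall a : 'I_m.+2 -> M, lin_indep a -> forall z : M,
  R (snoc_tuple a z) <->
  exists s : 'I_m.+2 -> rat,
    (forall i : 'I_m.+2, (0 < val i)%N -> s i = 1 \/ s i = -1) /\
    forall k, mval z k =
      \sum_(i < m.+2) (if val i == 0%N then 1 else s i) * r i * mval (a i) k.

Local Notation r1 := (r ord0).
Local Notation r2 := (r (lift ord0 ord0)).
Local Notation rtail := (fun j => r (inord j.+2)).

Lemma snoc_tuple_nth (a : seq M) z : size a = m.+2 ->
  (fun j : 'I_m.+3 => nth zeroM (rcons a z) j) = snoc_tuple (fun i : 'I_m.+2 => nth zeroM a i) z.
Proof.
move=> am; apply: functional_extensionality => j; rewrite /snoc_tuple.
case: unliftP => [i -> | ->]; rewrite ?lift_max nth_rcons am /=; last by rewrite ltnn eqxx.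
by rewrite ltn_ord.
Qed.

Lemma R_cons2 x b cs z : size cs = m ->
  lin_indep (fun i : 'I_m.+2 => nth zeroM [:: x, b & cs] i) ->
  (R (fun j => nth zeroM [:: x, b & rcons cs z] j) <->
   exists s1 sg, sign s1 /\ (forall j, sign (sg j)) /\ forall k,
     mval z k = r1 * mval x k + s1 * r2 * mval b k + comb (fun j => sg j * rtail j) cs k).
Proof.
move=> csm indep; rewrite -!rcons_cons (@snoc_tuple_nth [:: x, b & cs] z) /= ?csm // hR //.
have sum_split s k :
  \sum_(i < m.+2) (if val i == 0%N then 1 else s i) * r i * mval (nth zeroM [:: x, b & cs] i) k =
  r1 * mval x k + s (lift ord0 ord0) * r2 * mval b k +
  comb (fun j => s (inord j.+2) * rtail j) cs k.
  rewrite (sum_nth_cons2 (fun i => (if val i == 0%N then 1 else s i) * r i) x b k csm) /= mul1r.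
  by congr (_ + _); apply: eq_comb => j; rewrite csm => jm; rewrite inordK.
split=> [[s [hs E]] | [s1 [sg [hs1 [hsg E]]]]].
  exists (s (lift ord0 ord0)), (fun j => if (j < m)%N then s (inord j.+2) else 1).
  split; first exact: hs.
  split=> [j | k]; first by case: ifP => [jm | _]; [apply: hs; rewrite /= inordK | exact: sign1].
  rewrite E sum_split; congr (_ + _).
  by apply: eq_comb => j; rewrite csm => ->.
exists (fun i : 'I_m.+2 => if i == 1%N :> nat then s1 else sg (i - 2)%N); split.
  by move=> i _; case: eqP => _; [exact: hs1 | exact: hsg].
move=> k; rewrite E sum_split; congr (_ + _).
by apply: eq_comb => j; rewrite csm => jm; rewrite inordK ?subn2.
Qed.

Lemma pm_scale_r12 P x y b : indep2 x y -> supported P (mval y) -> pm_scale (r1 / r2) y b ->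
  [/\ indep2 x b, supported P (mval b) &
     exists e, sign e /\ forall k, r2 * mval b k = e * r1 * mval y k].
Proof.
move=> xy Py [e [he E]]; split.
- apply: indep2_scale xy _ E.
  by rewrite !mulf_eq0 invr_eq0 !(negbTE (hr _)) (negbTE (sign_neq0 he)).
- by move=> K PK; rewrite E Py ?mulr0.
- by exists e; split=> // k; rewrite E; field.
Qed.

Definition joint_value x y cs z := exists b w,
  pm_scale (r1 / r2) y b /\ pm_scale (r1 / r2) x w /\
  R (fun j => nth zeroM [:: x, b & rcons cs z] j) /\
  R (fun j => nth zeroM [:: y, w & rcons cs z] j).

Lemma joint_value_iff P x y cs z : indep2 x y -> size cs = m ->
  supported P (mval x) -> supported P (mval y) -> escaping P cs ->
  (joint_value x y cs z <-> exists sg, (forall j, sign (sg j)) /\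
     forall k, mval z k = r1 * (mval x k + mval y k) + comb (fun j => sg j * rtail j) cs k).
Proof.
move=> xy csm Px Py escs; split=> [[b [w [Hb [Hw [Rb Rw]]]]] | [sg [hsg E]]].
  have [xb Pb [eb [_ Eb]]] := pm_scale_r12 xy Py Hb.
  have [yw Pw [ew [_ Ew]]] := pm_scale_r12 (indep2C xy) Px Hw.
  move: Rb => /(R_cons2 _ csm (lin_indep_cons2 csm xb Px Pb escs)) [s1 [sg [_ [hsg E1]]]].
  move: Rw => /(R_cons2 _ csm (lin_indep_cons2 csm yw Py Pw escs)) [t1 [tg [_ [_ E2]]]].
  pose mu j := 1 * (tg j * rtail j) + (-1) * (sg j * rtail j).
  have D k : (r1 - t1 * ew * r1) * mval x k + (s1 * eb * r1 - r1) * mval y k = comb mu cs k.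
    have := E2 k; rewrite E1 comb_lin -!mulrA Eb Ew; lra.
  have supp : supported P (comb mu cs) by move=> K PK; rewrite -D Px ?Py ?mulr0 ?addr0.
  have [_ /eqP] := xy _ _ (fun k => etrans (D k) (escaping_comb0 escs supp k)).
  rewrite subr_eq0 => /eqP c1; exists sg; split=> // k.
  by rewrite E1 -mulrA Eb !mulrA c1; ring.
pose b := lcM (r1 / r2) 0 y y; pose w := lcM (r1 / r2) 0 x x.
have Hb : pm_scale (r1 / r2) y b by exists 1; split=> [|k /=]; [exact: sign1 | ring].
have Hw : pm_scale (r1 / r2) x w by exists 1; split=> [|k /=]; [exact: sign1 | ring].
have [xb Pb _] := pm_scale_r12 xy Py Hb.
have [yw Pw _] := pm_scale_r12 (indep2C xy) Px Hw.
exists b, w; do 2!split=> //; split.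
  apply/(R_cons2 _ csm (lin_indep_cons2 csm xb Px Pb escs)); exists 1, sg.
  by split; [exact: sign1 | split=> // k; rewrite E /=; field].
apply/(R_cons2 _ csm (lin_indep_cons2 csm yw Py Pw escs)); exists 1, sg.
by split; [exact: sign1 | split=> // k; rewrite E /=; field].
Qed.

Definition pm_sum_with x y s cs := exists z1 z2 t,
  joint_value x y cs z1 /\ joint_value x y cs z2 /\ pmR z1 z2 t /\ pm_scale (2 * r1)^-1 t s.

Lemma pm_sum_with_iff x y s cs : indep2 x y -> size cs = m -> escaping [:: x; y; s] cs ->
  (pm_sum_with x y s cs <-> pm_sum x y s \/ null s).
Proof.
move=> xy csm escs.
have Px : supported [:: x; y; s] (mval x) by move=> K PK; apply: PK; left.
have Py : supported [:: x; y; s] (mval y) by move=> K PK; apply: PK; right; left.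
have Ps : supported [:: x; y; s] (mval s) by move=> K PK; apply: PK; right; right; left.
have JV z := joint_value_iff z xy csm Px Py escs.
split=> [[z1 [z2 [t [/JV [sg1 [_ E1]] [/JV [sg2 [_ E2]] [Hzt [e [he Es]]]]]]]] | ].
  have [e1 [e2 [he1 [he2 Et]]]] := Hzt.
  pose c := e * (e1 + e2) / 2.
  pose mu j := e / (2 * r1) * e1 * (sg1 j * rtail j) + e / (2 * r1) * e2 * (sg2 j * rtail j).
  have D k : mval s k - c * (mval x k + mval y k) = comb mu cs k.
    by rewrite comb_lin Es Et E1 E2 /c; field; rewrite hr.
  have supp : supported [:: x; y; s] (comb mu cs).
    by move=> K PK; rewrite -D Ps ?Px ?Py ?addr0 ?mulr0 ?subr0.
  have {}Es k : mval s k = c * (mval x k + mval y k).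
    by apply/eqP; rewrite -subr_eq0 D (escaping_comb0 escs supp).
  case: he1 => ee1; case: he2 => ee2; rewrite /c ee1 ee2 in Es.
  - by left; exists e; split=> // k; rewrite Es; field.
  - by right=> k; rewrite Es; field.
  - by right=> k; rewrite Es; field.
  - by left; exists (- e); split=> [|k]; [exact: signN | rewrite Es; field].
pose z sg := lcM 1 1 (lcM r1 r1 x y) (combM (fun j => sg * rtail j) cs).
have Jz sg : sign sg -> joint_value x y cs (z sg).
  by move=> hsg; apply/JV; exists (fun => sg); split=> // k; rewrite /= mul1r mulrDr mul1r.
case=> [[e [he Es]] | ns].
  exists (z 1), (z (-1)), (lcM 1 1 (z 1) (z (-1))).
  split; first exact: Jz sign1; split; first exact: Jz signN1.
  split; first exact: (pmRI sign1 sign1).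
  exists e; split=> // k; rewrite Es /=.
  rewrite (@eq_comb (fun j => -1 * rtail j) (fun j => - (1 * rtail j))) ?combN;
    last by move=> j _; rewrite mulN1r mul1r.
  by field; rewrite hr.
exists (z 1), (z 1), zeroM; split; first exact: Jz sign1.
split; first exact: Jz sign1.
split; first by apply: (pmRI sign1 signN1) => k /=; ring.
by exists 1; split=> [|k]; [exact: sign1 | rewrite ns /= mulr0].
Qed.

Definition pm_sum_with_seq (l : seq M) :=
  pm_sum_with (nth zeroM l 0) (nth zeroM l 1) (nth zeroM l 2) (drop 3 l).

(* [large_iter] prepends the escaping vectors to [[:: x; y; s]]; [rot m] brings
   [x, y, s] back to the front. *)
Definition pm_sum_large x y s :=
  ~ null s /\ large_iter m (fun l => pm_sum_with_seq (rot m l)) [:: x; y; s].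

Lemma pm_sum_large_iff x y s : indep2 x y -> (pm_sum_large x y s <-> pm_sum x y s).
Proof.
move=> xy; rewrite /pm_sum_large.
rewrite (@large_iter_iff [:: x; y; s] _ (pm_sum x y s \/ null s) m [::]) //.
  split=> [[ns []] // | xys]; split; [exact: pm_sum_not_null xys | by left].
move=> ds dsm; rewrite cats0 => escs.
by rewrite /pm_sum_with_seq -dsm rot_size_cat /= drop0 pm_sum_with_iff.
Qed.

Definition plus_indep x y s := pm_sum_large x y s /\ ~ pm_sum_large s x y.

Lemma plus_indep_iff x y s : indep2 x y -> (plus_indep x y s <-> plusR x y s).
Proof.
move=> xy; rewrite /plus_indep pm_sum_large_iff //.
split=> [[[e [he Es]] nsxy] | Es].
  rewrite (pm_sum_large_iff y (indep2_pm_sum xy (ex_intro _ e (conj he Es)))) in nsxy.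
  case: he => ee; first by move=> k; rewrite Es ee mul1r.
  by exfalso; apply: nsxy; exists (-1); split=> [|k]; [exact: signN1 | rewrite Es ee; ring].
have xys : pm_sum x y s by exists 1; split=> [|k]; [exact: sign1 | rewrite Es mul1r].
split=> //; rewrite (pm_sum_large_iff y (indep2_pm_sum xy xys)) => -[t [ht Et]].
have [k | t0 t1] := xy (- 2 * t) (1 - t); first by have := Et k; rewrite Es; lra.
by case: ht => tE; rewrite tE in t0 t1; lra.
Qed.

Definition plus_shift x y s u :=
  exists v t, plus_indep x u v /\ plus_indep v y t /\ plus_indep u s t.

Lemma plus_shift_iff x y s u : ~ null x -> ~ null y -> ~ null s -> escapes [:: x; y; s] u ->
  (plus_shift x y s u <-> plusR x y s).
Proof.
move=> nx ny ns escu.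
have xu : indep2 x u by apply: escapes_indep2 nx _ escu; left.
have us : indep2 u s by apply/indep2C/(escapes_indep2 ns _ escu); right; right; left.
have vy v : plusR x u v -> indep2 v y.
  move=> Ev; apply/indep2C/(escapes_indep2 (P := [:: y]) ny); first by left.
  have [K [PK uK]] := escu; exists K; split; first by move=> p [<- | []]; apply: PK; right; left.
  by rewrite Ev (PK x) ?add0r //; left.
split=> [[v [t [/(plus_indep_iff _ xu) Ev [Et Et']]]] | Es].
  move: Et Et' => /(plus_indep_iff _ (vy v Ev)) Et /(plus_indep_iff _ us) Et' k.
  by have := Et' k; rewrite Et Ev; lra.
pose v := lcM 1 1 x u; have Ev : plusR x u v by move=> k /=; ring.
exists v, (lcM 1 1 v y); split; first exact/(plus_indep_iff _ xu).
split; [apply/(plus_indep_iff _ (vy v Ev)) | apply/(plus_indep_iff _ us)] => k /=;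
  rewrite ?Es; ring.
Qed.

Lemma plus_null_iff x y s : null s -> (plusR x y s <-> pmR x y s /\ ~ (x = y /\ ~ null x)).
Proof.
move=> ns; split=> [Es | [[e1 [e2 [he1 [he2 E]]]] nxy]].
  split; first by apply: (pmRI sign1 sign1) => k; rewrite Es !mul1r.
  case=> exy; apply=> k; move/eqP: (ns k).
  by rewrite Es -exy -mulr2n -mulr_natr mulf_eq0 orbF => /eqP.
have [exy | nexy] := classic (x = y).
  have nx : null x by apply: NNPP => nx; apply: nxy.
  by move=> k; rewrite ns -exy nx addr0.
have e12 : e1 = e2.
  apply: NNPP => ne; apply: nexy; apply: M_ext => k; move: (E k); rewrite ns.
  by case: he1 he2 ne => -> [] -> ne; try lra; case: ne.
by move=> k; move: (E k); rewrite ns e12; case: he2 => ->; lra.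
Qed.

Definition plus_large x y s :=
  (null x /\ s = y) \/ (null y /\ s = x) \/ (null s /\ pmR x y s /\ ~ (x = y /\ ~ null x)) \/
  (~ null x /\ ~ null y /\ ~ null s /\ large (plus_shift x y s)).

Lemma plus_large_iff x y s : plus_large x y s <-> plusR x y s.
Proof.
have shift : ~ null x -> ~ null y -> ~ null s -> (large (plus_shift x y s) <-> plusR x y s).
  by move=> nx ny ns; apply: (large_iff (P := [:: x; y; s])) => u; apply: plus_shift_iff.
split=> [[[nx ->] k | [[ny ->] k | [[ns /(plus_null_iff _ _ ns)] | [nx [ny [ns]]]]]] | ] //.
- by rewrite nx add0r.
- by rewrite ny addr0.
- by move/(shift nx ny ns).
move=> Es; have [nx | nx] := classic (null x).
  by left; split=> //; apply: M_ext => k; rewrite Es nx add0r.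
right; have [ny | ny] := classic (null y).
  by left; split=> //; apply: M_ext => k; rewrite Es ny addr0.
right; have [ns | ns] := classic (null s); first by left; split=> //; apply/plus_null_iff.
by right; do 3!split=> //; apply/(shift nx ny ns).
Qed.

Lemma expressible_joint_value : expressible R m.+3
  (fun l => joint_value (nth zeroM l 0) (nth zeroM l 1) (drop 3 l) (nth zeroM l 2)).
Proof.
have ER i j : (i < 5)%N -> (j < 5)%N -> expressible R m.+3.+2
    (fun l => R (fun k => nth zeroM (map (nth zeroM l) [:: i, j & rcons (iota 5 m) 4]%N) k)).
  move=> i5 j5; apply: expressible_select (expressible_R R) _ _.
    by rewrite /= size_rcons size_iota.
  rewrite /= all_rcons all_iota_lt; last by lia.
  by rewrite andbT; apply/and3P; split; lia.
have ES i j : (i < 5)%N -> (j < 5)%N -> expressible R m.+3.+2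
    (fun l => pm_scale (r1 / r2) (nth zeroM l i) (nth zeroM l j)).
  move=> i5 j5; apply: (expressible_select (idx := [:: i; j]) (expressible_pm_scale R _)) => //=.
  by rewrite andbT; apply/andP; split; lia.
apply: expressible_ext (expressible_exists (expressible_exists (expressible_and (ES 3 1 isT isT)
  (expressible_and (ES 2 0 isT isT) (expressible_and (ER 2 1 isT isT) (ER 3 0 isT isT))))))%N.
move=> [|x [|y [|z cs]]] //= [csm].
have Ecs b w : map (nth zeroM [:: w, b, x, y, z & cs]) (rcons (iota 5 m) 4%N) = rcons cs z.
  by rewrite map_rcons -csm (map_nth_iota_cat [:: w; b; x; y; z]).
by split=> -[b [w H]]; exists b, w; move: H; rewrite !Ecs drop0.
Qed.

Lemma expressible_pm_sum_with : expressible R m.+3 pm_sum_with_seq.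
Proof.
have EJ i : (i < 6)%N -> expressible R m.+3.+3 (fun l => joint_value (nth zeroM l 3)
    (nth zeroM l 4) (map (nth zeroM l) (iota 6 m)) (nth zeroM l i)).
  move=> i6; apply: expressible_ext
    (expressible_select (idx := [:: 3, 4, i & iota 6 m]%N) expressible_joint_value _ _).
  - by move=> l _; rewrite /= drop0.
  - by rewrite /= size_iota.
  - by rewrite /= all_iota_lt ?andbT; lia.
have EP : expressible R m.+3.+3 (fun l => pmR (nth zeroM l 2) (nth zeroM l 1) (nth zeroM l 0)).
  exact: (expressible_select (idx := [:: 2; 1; 0]%N) (expressible_pmR R)).
have ES : expressible R m.+3.+3 (fun l => pm_scale (2 * r1)^-1 (nth zeroM l 0) (nth zeroM l 5)).
  exact: (expressible_select (idx := [:: 0; 5]%N) (expressible_pm_scale R _)).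
apply: expressible_ext (expressible_exists (expressible_exists (expressible_exists
  (expressible_and (EJ 2%N isT) (expressible_and (EJ 1%N isT) (expressible_and EP ES)))))).
move=> [|x [|y [|s cs]]] //= [csm].
have Ecs t z2 z1 : map (nth zeroM [:: t, z2, z1, x, y, s & cs]) (iota 6 m) = cs.
  by rewrite -csm (map_nth_iota_cat [:: t; z2; z1; x; y; s]).
rewrite /pm_sum_with_seq /= drop0.
by split=> -[z1 [z2 [t H]]]; exists z1, z2, t; move: H; rewrite !Ecs.
Qed.

Lemma expressible_pm_sum_large :
  expressible R 3 (fun l => pm_sum_large (nth zeroM l 0) (nth zeroM l 1) (nth zeroM l 2)).
Proof.
have EL : expressible R 3 (large_iter m (fun l => pm_sum_with_seq (rot m l))).
  apply: expressible_large_iter; rewrite addn3.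
  by apply: expressible_rot expressible_pm_sum_with; lia.
apply: expressible_ext (expressible_and (expressible_not
  (expressible_select (idx := [:: 2%N]) (expressible_null R) _ _)) EL) => //.
by move=> [|x [|y [|s []]]].
Qed.

Lemma expressible_plus_indep :
  expressible R 3 (fun l => plus_indep (nth zeroM l 0) (nth zeroM l 1) (nth zeroM l 2)).
Proof.
exact: (expressible_and expressible_pm_sum_large (expressible_not
  (expressible_select (idx := [:: 2; 0; 1]%N) expressible_pm_sum_large _ _))).
Qed.

Lemma expressible_plus_shift :
  expressible R 4
    (fun l => plus_shift (nth zeroM l 1) (nth zeroM l 2) (nth zeroM l 3) (nth zeroM l 0)).
Proof.
have EP i j k : all (fun x => x < 6)%N [:: i; j; k] -> expressible R 6
    (fun l => plus_indep (nth zeroM l i) (nth zeroM l j) (nth zeroM l k)).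
  exact: (expressible_select (idx := [:: i; j; k]) expressible_plus_indep).
apply: expressible_ext (expressible_exists (expressible_exists (expressible_and (EP 3 2 1 isT)
  (expressible_and (EP 1 4 0 isT) (EP 2 5 0 isT)))))%N => //.
Qed.

Lemma expressible_plus_large :
  expressible R 3 (fun l => plus_large (nth zeroM l 0) (nth zeroM l 1) (nth zeroM l 2)).
Proof.
have EN i : (i < 3)%N -> expressible R 3 (fun l => null (nth zeroM l i)).
  by move=> i3; apply: (expressible_select (idx := [:: i]) (expressible_null R)); rewrite //= i3.
have EE i j : all (fun x => x < 3)%N [:: i; j] ->
    expressible R 3 (fun l => nth zeroM l i = nth zeroM l j).
  exact: (expressible_select (idx := [:: i; j]) (expressible_eq R)).
have ET := expressible_large expressible_plus_shift.
apply: expressible_ext (expressible_or (expressible_and (EN 0 isT) (EE 2 1 isT))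
  (expressible_or (expressible_and (EN 1 isT) (EE 2 0 isT))
  (expressible_or (expressible_and (EN 2 isT) (expressible_and (expressible_pmR R)
     (expressible_not (expressible_and (EE 0 1 isT) (expressible_not (EN 0 isT))))))
  (expressible_and (expressible_not (EN 0 isT)) (expressible_and (expressible_not (EN 1 isT))
     (expressible_and (expressible_not (EN 2 isT)) ET))))))%N => //.
Qed.

Lemma expressible_plusR :
  expressible R 3 (fun l => plusR (nth zeroM l 0) (nth zeroM l 1) (nth zeroM l 2)).
Proof. by apply: expressible_ext expressible_plus_large => l _; apply: plus_large_iff. Qed.

End Addition.

Theorem mainTheorem18 (n : nat) (hn : (2 <= n)%N) (r : 'I_n -> rat)
  (hr : forall i, r i != 0) (R : ('I_n.+1 -> M) -> Prop)
  (hRdef : definable_plus R)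
  (hR : forall a : 'I_n -> M, lin_indep a -> forall z : M,
      R (snoc_tuple a z) <->
      exists s : 'I_n -> rat,
        (forall i : 'I_n, (0 < val i)%N -> s i = 1 \/ s i = -1) /\
        forall k, mval z k =
          \sum_(i < n) (if val i == 0%N then 1 else s i) * r i * mval (a i) k) :
  definable (RS_I R) plus_rel.
Proof.
case: n hn r hr R hRdef hR => [|[|m]] // _ r hr R _ hR.
exact: definable_plus_rel (expressible_plusR hr hR).
Qed.
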